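(* Let $G$ be a graph with an RDV representation on a rooted tree $T$, and let $v_1$ be a vertex of $G$ that maximizes $y(t(v_1))$ (the distance of $t(v_1)$ from the root) over all vertices. Then $v_1$ is simple in $G$: its closed neighbourhood $N[v_1]$ is a clique, and its elements can be ordered $w_1,\dots,w_k$ so that $N[w_1]\subseteq N[w_2]\subseteq\cdots\subseteq N[w_k]$.
   Context: An RDV representation of a graph $G$ consists of a rooted tree $T$ and, for every vertex $v$ of $G$, a downward path $P(v)$ in $T$ (a path starting at some node and always proceeding from a node to one of its children), such that distinct $v,w$ are adjacent iff $P(v)$ and $P(w)$ share a node. $t(v)$ is the node of $P(v)$ closest to the root, and $y(u)$ denotes the distance of node $u$ from the root. $N[v]$ is the closed neighbourhood of $v$ (the set consisting of $v$ and its neighbours). *)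

From mathcomp Require Import all_boot.
Set Implicit Arguments. Unset Strict Implicit. Unset Printing Implicit Defensive.

(* A rooted tree on a finite node type N: a root and a parent map with
   par root = root, such that every node reaches the root by iterating par.
   (The edges u -- par u, u <> root, then form a tree rooted at root.) *)
Record rtree (N : finType) := RTree {
  root : N;
  par : N -> N;
  par_root : par root = root;
  reach_root : forall u : N, exists k, iter k par u == root
}.

Definition depth (N : finType) (T : rtree N) (u : N) : nat :=
  ex_minn (reach_root T u).

Definition child (N : finType) (T : rtree N) : rel N :=
  fun a c => (par T c == a) && (c != a).

Definition simple_graph (V : finType) (e : rel V) : Prop :=
  symmetric e /\ irreflexive e.

(* An RDV representation of (V, e) on T: for each vertex v, a downward path
   P(v) = t v :: s v, starting at t v (the node closest to the root) and
   proceeding from each node to one of its children. *)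
Record rdv_rep (V N : finType) (e : rel V) (T : rtree N) := RDV {
  top : V -> N;
  rest : V -> seq N;
  rdv_down : forall v, path (child T) (top v) (rest v);
  rdv_adj : forall v w, v != w ->
     (e v w <-> [set x in top v :: rest v] :&: [set x in top w :: rest w] != set0)
}.

Definition cnbhd (V : finType) (e : rel V) (v : V) : {set V} :=
  [set w | (w == v) || e v w].

Definition simple_vertex (V : finType) (e : rel V) (v : V) : Prop :=
  (forall x y, x \in cnbhd e v -> y \in cnbhd e v -> x != y -> e x y) /\
  exists s : seq V, [/\ uniq s, (forall x, (x \in s) = (x \in cnbhd e v)) &
     sorted (fun a b => cnbhd e a \subset cnbhd e b) s].

(* Let a = t(v1).  A neighbour w of v1 shares a node x with P(v1); x lies
   below a, and t(w) is not deeper than a, so the downward path P(w), which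
   contains every ancestor of x down to the depth of t(w), contains a.  Hence
   all of N[v1] passes through a, which makes N[v1] a clique.  Listing N[v1]
   by decreasing depth of t(w) gives the chain: if t(w2) is not deeper than
   t(w1) and u meets P(w1) at x, then either x lies below a and P(u) contains
   a, or x lies above a and P(w2) contains x. *)

From Pilot Require Import Defs.
From mathcomp Require Import all_boot zify.
Set Implicit Arguments. Unset Strict Implicit. Unset Printing Implicit Defensive.

Section RootedTree.
Variables (N : finType) (T : rtree N).

Lemma iter_par_depth u : iter (depth T u) (par T) u = Defs.root T.
Proof. by rewrite /depth; case: ex_minnP => m /eqP. Qed.

Lemma depth_min u k : iter k (par T) u = Defs.root T -> depth T u <= k.
Proof. by move=> /eqP reach; rewrite /depth; case: ex_minnP => m _; apply. Qed.

Lemma depth_root : depth T (Defs.root T) = 0.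
Proof. by apply/eqP; rewrite -leqn0 depth_min. Qed.

Lemma depth0_root u : depth T u = 0 -> u = Defs.root T.
Proof. by move=> du0; rewrite -(iter_par_depth u) du0. Qed.

Lemma depth_par u : depth T (par T u) = (depth T u).-1.
Proof.
case du: (depth T u) => [|m] /=.
  by rewrite (depth0_root du) par_root depth_root.
apply/eqP; rewrite eqn_leq depth_min -?iterSr -?du ?iter_par_depth //=.
by rewrite -ltnS -du depth_min // iterSr iter_par_depth.
Qed.

Lemma depth_iter_par k u : depth T (iter k (par T) u) = depth T u - k.
Proof. by elim: k => [|k IH]; rewrite ?subn0 //= depth_par IH subnS. Qed.

Lemma child_path_traject t s : path (child T) t s ->
  t :: s = rev (traject (par T) (last t s) (size s).+1).
Proof.
elim: s t => [|c s IH] t //; rewrite [path _ _ _]/= [last _ _]/= [size _]/=.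
case/andP=> /andP[/eqP par_c _] /IH cs_traj.
rewrite trajectSr rev_rcons -cs_traj iterS.
by move: cs_traj; rewrite trajectSr rev_rcons => -[<- _]; rewrite par_c.
Qed.

Lemma mem_child_path t s x : path (child T) t s ->
  reflect (exists2 j, j <= size s & x = iter j (par T) (last t s)) (x \in t :: s).
Proof.
move/child_path_traject ->; rewrite mem_rev.
by apply: (iffP trajectP) => -[j]; exists j.
Qed.

Lemma child_path_top t s : path (child T) t s ->
  t = iter (size s) (par T) (last t s).
Proof. by move/child_path_traject; rewrite trajectSr rev_rcons => -[]. Qed.

Lemma child_path_top_anc t s x : path (child T) t s -> x \in t :: s ->
  exists k, t = iter k (par T) x.
Proof.
move=> ts /(mem_child_path _ ts)[j le_j ->]; exists (size s - j).
by rewrite -iterD subnK // -child_path_top.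
Qed.

Lemma child_path_depth t s x : path (child T) t s -> x \in t :: s ->
  depth T t <= depth T x.
Proof. by move=> ts /(child_path_top_anc ts)[k ->]; rewrite depth_iter_par leq_subr. Qed.

Lemma child_path_anc_total t s x y : path (child T) t s ->
  x \in t :: s -> y \in t :: s ->
  exists k, x = iter k (par T) y \/ y = iter k (par T) x.
Proof.
move=> ts /(mem_child_path _ ts)[i _ ->] /(mem_child_path _ ts)[j _ ->].
case: (leqP i j) => [le_ij | /ltnW le_ji].
  by exists (j - i); right; rewrite -iterD subnK.
by exists (i - j); left; rewrite -iterD subnK.
Qed.

(* An ancestor beyond the top can only be deep enough at depth 0, where it
   and the top are both the root. *)
Lemma child_path_anc t s x k : path (child T) t s -> x \in t :: s ->
  depth T t <= depth T (iter k (par T) x) -> iter k (par T) x \in t :: s.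
Proof.
move=> ts /(mem_child_path _ ts)[j le_j ->]; rewrite -iterD.
have [le_kj _ | lt_kj] := leqP (k + j) (size s).
  by apply/(mem_child_path _ ts); exists (k + j).
have dt := congr1 (depth T) (child_path_top ts); rewrite depth_iter_par in dt.
rewrite dt depth_iter_par => deep.
have t0 : depth T t = 0 by lia.
have y0 : depth T (iter (k + j) (par T) (last t s)) = 0.
  by rewrite depth_iter_par; lia.
by rewrite (depth0_root y0) -(depth0_root t0) mem_head.
Qed.

End RootedTree.

Section RDV.
Variables (V N : finType) (e : rel V) (T : rtree N) (R : rdv_rep e T).
Hypothesis e_irr : irreflexive e.

Local Notation P v := (top R v :: rest R v).

Lemma rdv_meet_cnbhd v w x : x \in P v -> x \in P w -> w \in cnbhd e v.
Proof.
move=> xv xw; rewrite inE; case: (eqVneq w v) => //= /[1! eq_sym] neq_vw.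
apply/(rdv_adj R neq_vw)/set0Pn; exists x; rewrite !inE; exact/andP.
Qed.

Lemma rdv_edge_meet v w : e v w -> exists2 x, x \in P v & x \in P w.
Proof.
move=> evw; have neq_vw : v != w by apply: contraTneq evw => ->; rewrite e_irr.
by have /set0Pn[x] := (rdv_adj R neq_vw).1 evw; rewrite !inE => /andP[]; exists x.
Qed.

Variable v1 : V.
Hypothesis top_v1_deepest : forall v, depth T (top R v) <= depth T (top R v1).

Lemma cnbhd_through_top w : w \in cnbhd e v1 -> top R v1 \in P w.
Proof.
rewrite inE => /orP[/eqP -> | /rdv_edge_meet[x xv1 xw]]; first exact: mem_head.
have [k top_x] := child_path_top_anc (rdv_down R v1) xv1.
by rewrite top_x child_path_anc ?(rdv_down R) // -top_x.
Qed.

Lemma cnbhd_clique x y : x \in cnbhd e v1 -> y \in cnbhd e v1 -> x != y -> e x y.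
Proof.
move=> /cnbhd_through_top ax /cnbhd_through_top ay neq_xy.
by move: (rdv_meet_cnbhd ax ay); rewrite inE eq_sym (negPf neq_xy).
Qed.

Lemma cnbhd_chain w1 w2 : w1 \in cnbhd e v1 -> w2 \in cnbhd e v1 ->
  depth T (top R w2) <= depth T (top R w1) -> cnbhd e w1 \subset cnbhd e w2.
Proof.
move=> /cnbhd_through_top a1 /cnbhd_through_top a2 le_w21.
apply/subsetP => u; rewrite [u \in cnbhd e w1]inE.
case/orP=> [/eqP -> | /rdv_edge_meet[x x1 xu]]; first exact: rdv_meet_cnbhd a2 a1.
have [k [a_x | x_a]] := child_path_anc_total (rdv_down R w1) a1 x1.
  have au : top R v1 \in P u.
    by rewrite a_x child_path_anc ?(rdv_down R) // -a_x.
  exact: rdv_meet_cnbhd a2 au.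
have x2 : x \in P w2.
  rewrite x_a child_path_anc ?(rdv_down R) // -x_a.
  exact: leq_trans le_w21 (child_path_depth (rdv_down R w1) x1).
exact: rdv_meet_cnbhd x2 xu.
Qed.

End RDV.

Theorem mainTheorem6 (V N : finType) (e : rel V) (T : rtree N)
  (R : rdv_rep e T) (v1 : V) :
  simple_graph e ->
  (forall v : V, depth T (top R v) <= depth T (top R v1)) ->
  simple_vertex e v1.
Proof.
move=> [_ e_irr] v1_deepest; split; first exact: cnbhd_clique.
pose deeper x y := depth T (top R y) <= depth T (top R x).
exists (sort deeper (enum (cnbhd e v1))); split.
- by rewrite sort_uniq enum_uniq.
- by move=> x; rewrite mem_sort mem_enum.
apply: (@sub_in_sorted _ (mem (cnbhd e v1)) deeper).
- by move=> w1 w2 w1N w2N; apply: cnbhd_chain.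
- by apply/allP => x; rewrite mem_sort mem_enum.
by apply: sort_sorted => x y; apply: leq_total.
Qed.
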